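(* Let $1\le i<n$ be integers with $\gcd(n,i)=d$, and let $J_n=\sum_{j=1}^{n-1}E_{j,j+1}\in M_n(\mathbb{C})$. Then $$l(\{J_n^i,(J_n^T)^{n-i}\})=l_0(\{J_n^i,(J_n^T)^{n-i}\})=\frac{2n}{d}-2.$$
   Context: $E_{i,j}$ is the matrix unit. For a finite subset $\mathcal S$ of $M_n(\mathbb{C})$: a word of length $m$ is a product $S_1\cdots S_m$ with $S_j\in\mathcal S$, the word of length $0$ being $I_n$. $\mathcal L_k(\mathcal S)$ is the span of words of length at most $k$ including $I_n$; $\mathcal L_k^0(\mathcal S)$ is the span of words of length between $1$ and $k$ (identity not automatically included). $l(\mathcal S)$ is the smallest $k$ with $\mathcal L_k(\mathcal S)=\mathcal L_{k+1}(\mathcal S)$, and $l_0(\mathcal S)$ is the smallest $k$ with $\mathcal L^0_k(\mathcal S)=\mathcal L^0_{k+1}(\mathcal S)$. *)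

(* The complex field C is rendered as algC. *)
From HB Require Import structures.
From mathcomp Require Import all_boot all_order all_algebra all_field.
Set Implicit Arguments. Unset Strict Implicit. Unset Printing Implicit Defensive.
Import GRing.Theory.
Local Open Scope ring_scope.

Section Words.
Variables (F : fieldType) (n : nat).

Definition mxpow (A : 'M[F]_n) (k : nat) : 'M[F]_n := iter k (mulmx A) 1%:M.

Fixpoint words (S : seq 'M[F]_n) (m : nat) : seq 'M[F]_n :=
  match m with
  | 0 => [:: 1%:M]
  | m'.+1 => [seq A *m w | A <- S, w <- words S m']
  end.

Definition Lspan (S : seq 'M[F]_n) (k : nat) : {vspace 'M[F]_n} :=
  <<flatten [seq words S m | m <- iota 0 k.+1]>>%VS.

Definition L0span (S : seq 'M[F]_n) (k : nat) : {vspace 'M[F]_n} :=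
  <<flatten [seq words S m | m <- iota 1 k]>>%VS.

Definition is_length (S : seq 'M[F]_n) (k : nat) : Prop :=
  Lspan S k = Lspan S k.+1 /\ (forall j, (j < k)%N -> Lspan S j <> Lspan S j.+1).

Definition is_length0 (S : seq 'M[F]_n) (k : nat) : Prop :=
  L0span S k = L0span S k.+1 /\ (forall j, (j < k)%N -> L0span S j <> L0span S j.+1).

End Words.

(* J_n = sum_{j=1}^{n-1} E_{j,j+1}; 0-indexed: ones at entries (a, a+1). *)
Definition Jmx (n : nat) : 'M[algC]_n :=
  \matrix_(a < n, b < n) (((b : nat) == (a : nat).+1)%:R : algC).

(* Column [b] of [A = J^i] vanishes for [b < i], column [b] of [B = (J^T)^(n-i)]
   vanishes for [b >= i], and the nonzero one is the unit vector [e_(b - i mod n)].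
   So a word in [A] and [B] is the partial permutation matrix sending [e_y] to
   [e_(y - k i)] for exactly those [y] whose orbit under [b |-> b - i (mod n)]
   lies, step by step, in [[i, n)] or in [[0, i)] as the letters of the word
   prescribe.  Every orbit has length [m = n/d] and meets [[0, i)] exactly [i/d]
   times per period, so the first [m - 1] letters of an orbit force the [m]-th:
   a word of length [2m - 1] is [0] or equal to a word of length [m - 1], which
   gives [L_(2m-2) = L_(2m-1)].  Conversely, for [k <= 2m - 2] the word read along
   the orbit of [n - 1 - i] is separated from all shorter words by a coordinate
   functional (for [k < m]), or by the difference of two of them, the second one
   following the orbit of [n - i], which runs beside the first with the same
   letters for [m - 2] steps. *)

From mathcomp Require Import all_boot all_order all_algebra all_field.
From mathcomp Require Import zify.

Set Implicit Arguments. Unset Strict Implicit. Unset Printing Implicit Defensive.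
Import GRing.Theory.

Local Open Scope ring_scope.

Lemma span_entry_rel (F : fieldType) p q (X : seq 'M[F]_(p, q)) a b a' b' (c : F) :
  (forall u, u \in X -> u a b = c * u a' b') ->
  forall v, v \in <<X>>%VS -> v a b = c * v a' b'.
Proof.
move=> rel_X v v_X; rewrite (coord_span (X := in_tuple X) v_X) !summxE mulr_sumr.
apply: eq_bigr => k _.
by rewrite !mxE rel_X ?mem_nth // mulrCA.
Qed.

Section WordSpan.
Variables (F : fieldType) (p : nat) (S : seq 'M[F]_p).

Lemma words_succ k : words S k.+1 = [seq A *m w | A <- S, w <- words S k].
Proof. by []. Qed.

Definition wspan a k := <<flatten [seq words S l | l <- iota a (k.+1 - a)]>>%VS.

Lemma Lspan_wspan k : Lspan S k = wspan 0 k.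
Proof. by rewrite /wspan subn0. Qed.

Lemma L0span_wspan k : L0span S k = wspan 1 k.
Proof. by rewrite /wspan subn1. Qed.

Lemma wspan_genP a k w : (a <= k.+1)%N ->
  reflect (exists2 l, (a <= l <= k)%N & w \in words S l)
          (w \in flatten [seq words S l | l <- iota a (k.+1 - a)]).
Proof.
move=> le_ak; apply: (iffP flatten_mapP) => -[l].
  by rewrite mem_iota subnKC // ltnS; exists l.
by exists l; rewrite // mem_iota subnKC.
Qed.

Lemma memv_wspan a k l w : (a <= l <= k)%N -> w \in words S l -> w \in wspan a k.
Proof. by move=> le_alk w_l; apply/memv_span/wspan_genP; [lia | exists l]. Qed.

Lemma wspan_stable a k : (a <= k.+1)%N ->
  {subset words S k.+1 <= wspan a k} -> wspan a k = wspan a k.+1.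
Proof.
move=> le_ak top_sub; apply/eqP; rewrite eqEsubv; apply/andP; split.
  by apply/span_subvP => w /wspan_genP[//|l le_l w_l]; apply: (memv_wspan _ w_l); lia.
apply/span_subvP => w /wspan_genP[|l le_l w_l]; first lia.
have [le_lk|lt_kl] := leqP l k; first by apply: (memv_wspan _ w_l); lia.
by apply: top_sub; have -> : k.+1 = l by lia.
Qed.

Lemma wspan_strict a j w : (a <= j.+1)%N ->
  w \in words S j.+1 -> w \notin wspan a j -> wspan a j <> wspan a j.+1.
Proof. by move=> le_aj w_j w_notin eq_span; rewrite eq_span (memv_wspan _ w_j) in w_notin; lia. Qed.
End WordSpan.

Section MxPow.
Variables (F : fieldType) (p : nat).
Implicit Types A : 'M[F]_p.

Lemma mxpowSr A k : mxpow A k.+1 = mxpow A k *m A.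
Proof.
rewrite /mxpow; elim: k => [|k IHk]; first by rewrite /= mulmx1 mul1mx.
by rewrite iterS {1}IHk mulmxA.
Qed.

Lemma trmx_mxpow A k : (mxpow A k)^T = mxpow A^T k.
Proof.
elim: k => [|k IHk]; first exact: trmx1.
by rewrite mxpowSr trmx_mul IHk.
Qed.
End MxPow.

Lemma mxpow_Jmx n k (a b : 'I_n) : mxpow (Jmx n) k a b = ((b : nat) == a + k)%N%:R.
Proof.
elim: k a => [|k IHk] a; first by rewrite mxE addn0 eq_sym.
rewrite [mxpow _ _]/= -/(mxpow (Jmx n) k) mxE.
have [lt_an | le_na] := ltnP a.+1 n.
  rewrite (bigD1 (Ordinal lt_an)) //= big1 => [|z ne_z].
    by rewrite mxE IHk eqxx mul1r addr0 addSnnS.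
  rewrite mxE; case: eqP => [eq_z|]; rewrite ?mul0r //.
  by case/eqP: ne_z; apply: val_inj.
rewrite big1 => [|z _].
  by have := ltn_ord b; case: eqP => //; lia.
by rewrite mxE; case: eqP => [eq_z|]; rewrite ?mul0r //; have := ltn_ord z; lia.
Qed.

Lemma mxpow_trJmx n k (a b : 'I_n) : mxpow (Jmx n)^T k a b = ((a : nat) == b + k)%N%:R.
Proof. by rewrite -trmx_mxpow mxE mxpow_Jmx. Qed.

Local Close Scope ring_scope.

Lemma eqn_mod_gap p a b : a == b %[mod p] -> b < a -> a < 2 * p -> a = b + p.
Proof.
by move=> + lt_ba lt_a2p; rewrite eqn_mod_dvd ?(ltnW lt_ba) // => /dvdnP[[|[|q]] eq_q]; lia.
Qed.

Section JordanWords.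
Variables n i : nat.
Hypotheses (i_gt0 : 0 < i) (i_lt_n : i < n).

(* Column [b] of [J^i] (if [i <= b]) or of [(J^T)^(n-i)] (if [b < i]) is the
   unit vector of row [rot b]. *)
Definition rot b := if i <= b then b - i else b + n - i.

Lemma rot_lt b : b < n -> rot b < n.
Proof. by rewrite /rot; case: (leqP i b); lia. Qed.

Lemma rot_inj a b : a < n -> b < n -> rot a = rot b -> a = b.
Proof. by rewrite /rot; case: (leqP i a); case: (leqP i b); lia. Qed.

Lemma rot_addi b : b < n -> rot b + i = b + n * ~~ (i <= b).
Proof. by rewrite /rot; case: (leqP i b); lia. Qed.

Lemma iter_rot_lt k b : b < n -> iter k rot b < n.
Proof. by move=> lt_bn; elim: k => //= k; apply: rot_lt. Qed.

(* [itinerary k y] records, latest step first (that is, in the order of the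
   factors of the corresponding word), whether [J^i] ([true]) or [(J^T)^(n-i)]
   acts at each of the first [k] steps of the orbit of [y]. *)
Definition letter j y := i <= iter j rot y.

Fixpoint itinerary k y :=
  if k is k'.+1 then letter k' y :: itinerary k' y else [::].

Lemma size_itinerary k y : size (itinerary k y) = k.
Proof. by elim: k => //= k ->. Qed.

Lemma itinerary_eqP k y z :
  reflect (forall j, j < k -> letter j y = letter j z)
          (itinerary k y == itinerary k z).
Proof.
elim: k => [|k IHk] /=; first exact: ReflectT.
rewrite eqseq_cons; apply: (iffP andP) => [[/eqP eq_k /IHk eq_lt] j|eq_lt].
  by rewrite ltnS leq_eqVlt => /orP[/eqP->|/eq_lt].
by split; [rewrite eq_lt | apply/IHk => j lt_jk; apply: eq_lt; lia].
Qed.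

(* Each letter [false] is a step that wraps around past [0]. *)
Lemma iter_rotE k y : y < n ->
  iter k rot y + k * i = y + n * count negb (itinerary k y).
Proof.
move=> lt_yn; elim: k => [|k IHk] /=; first lia.
have := rot_addi (iter_rot_lt k lt_yn); rewrite /letter.
by case: (i <= _) => /=; nia.
Qed.

Local Notation d := (gcdn n i).
Local Notation i' := (i %/ gcdn n i).
Definition period := n %/ d.

Lemma gcd_gt0 : 0 < d. Proof. by rewrite gcdn_gt0 i_gt0 orbT. Qed.

Lemma n_period_gcd : n = period * d. Proof. by rewrite divnK ?dvdn_gcdl. Qed.

Lemma i_quot_gcd : i = i' * d. Proof. by rewrite divnK ?dvdn_gcdr. Qed.

Lemma period_mul_i : period * i = n * i'.
Proof. by move: n_period_gcd i_quot_gcd; move: (gcdn n i) i' => e q; nia. Qed.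

Lemma coprime_period : coprime period i'.
Proof.
apply/eqP; have := gcd_gt0.
have : d = gcdn period i' * d by rewrite muln_gcdl -n_period_gcd -i_quot_gcd.
nia.
Qed.

Lemma period_gt1 : 1 < period.
Proof.
move: n_period_gcd i_quot_gcd gcd_gt0; move: (gcdn n i) i' => e q.
by case: q => [|q]; nia.
Qed.

Lemma iter_rot_period y : y < n -> iter period rot y = y.
Proof.
move=> lt_yn; have := iter_rotE period lt_yn; have := iter_rot_lt period lt_yn.
rewrite period_mul_i; case: (ltngtP (count negb (itinerary period y)) i'); nia.
Qed.

Lemma count_itinerary_period y : y < n ->
  count negb (itinerary period y) = i'.
Proof.
move=> lt_yn; have := iter_rotE period lt_yn.
by rewrite iter_rot_period // period_mul_i; nia.
Qed.

Lemma period_dvd_iter_rot k z : z < n -> iter k rot z = z -> period %| k.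
Proof.
move=> lt_zn fix_z; have := iter_rotE k lt_zn; rewrite fix_z => eq_z.
have /eqP : k * i' = period * count negb (itinerary k z).
  by move: eq_z n_period_gcd i_quot_gcd gcd_gt0; move: (gcdn n i) i' => e q; nia.
by rewrite -(Gauss_dvdl k coprime_period) => /eqP->; apply: dvdn_mulr.
Qed.

Lemma iter_rot_mod k y : y < n -> iter k rot y = iter (k %% period) rot y.
Proof.
move=> lt_yn; rewrite {1}(divn_eq k period) iterD.
by elim: (k %/ period) => [|q IHq]; rewrite ?mul0n // mulSn iterD IHq iter_rot_period ?iter_rot_lt.
Qed.

Lemma eq_iter_rot a b y : y < n ->
  (iter a rot y == iter b rot y) = (a == b %[mod period]).
Proof.
move=> lt_yn; apply/eqP/eqP=> [|eq_ab]; last by rewrite iter_rot_mod // eq_ab -iter_rot_mod.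
wlog le_ab : a b / a <= b => [hwlog|].
  by case: (leqP a b) => [|/ltnW] le; [apply: hwlog | move/esym/hwlog->].
rewrite -(subnK le_ab) iterD => /esym/(period_dvd_iter_rot (iter_rot_lt a lt_yn)).
by rewrite -eqn_mod_dvd // subnK // => /eqP.
Qed.

Lemma letter_mod j y : y < n -> letter j y = letter (j %% period) y.
Proof. by move=> lt_yn; rewrite /letter iter_rot_mod. Qed.

(* The last letter of a period is forced by the others, since every period
   wraps around exactly [i'] times. *)
Lemma itinerary_period_eq y z : y < n -> z < n ->
  itinerary period.-1 y = itinerary period.-1 z ->
  itinerary (2 * period).-1 y = itinerary (2 * period).-1 z.
Proof.
move=> lt_yn lt_zn eq_init; apply/eqP/itinerary_eqP => j _.
have /itinerary_eqP eq_lt : itinerary period.-1 y == itinerary period.-1 z.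
  by rewrite eq_init.
have eq_last : letter period.-1 y = letter period.-1 z.
  have := count_itinerary_period lt_yn; rewrite -(count_itinerary_period lt_zn).
  rewrite -(prednK (ltnW period_gt1)) /= eq_init.
  by case: (letter _ y); case: (letter _ z) => // /eqP; rewrite eqn_add2r.
rewrite letter_mod // [RHS]letter_mod //.
have lt_jp : j %% period < period by rewrite ltn_mod; have := period_gt1; lia.
by case: (ltngtP (j %% period) period.-1) => [/eq_lt|gt_jp|->] //; lia.
Qed.

Lemma iter_rot_neq a b y : y < n -> a < period -> b < period -> a != b ->
  iter a rot y != iter b rot y.
Proof. by move=> lt_yn lt_a lt_b; rewrite eq_iter_rot // !modn_small. Qed.

Lemma rot_succ b : b.+1 < n -> b.+1 != i -> rot b.+1 = (rot b).+1.
Proof. by rewrite /rot; case: (leqP i b); case: (leqP i b.+1); lia. Qed.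

Lemma iter_rot_last : iter period.-1 rot (rot n.-1) = n.-1.
Proof. by rewrite -iterSr prednK ?iter_rot_period //; have := period_gt1; lia. Qed.

Lemma iter_rot_penult : iter (period - 2) rot (rot n.-1) = i.-1.
Proof.
apply: rot_inj; rewrite ?iter_rot_lt ?rot_lt //; try lia.
rewrite -iterS (_ : (period - 2).+1 = period.-1) ?iter_rot_last.
  by rewrite /rot; case: leqP; lia.
by have := period_gt1; lia.
Qed.

(* The orbits of [rot n.-1 = n - 1 - i] and of its successor [n - i] run side
   by side until the first one reaches [i - 1]. *)
Lemma iter_rot_succ j : j <= period - 2 ->
  iter j rot (rot n.-1).+1 = (iter j rot (rot n.-1)).+1.
Proof.
have lt_x0n : rot n.-1 < n by rewrite rot_lt; lia.
have gt1 := period_gt1.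
elim: j => [|j IHj] lt_j //=; rewrite IHj ?rot_succ //; try lia.
- have := iter_rot_lt j lt_x0n; suff : iter j rot (rot n.-1) != n.-1 by lia.
  by rewrite -[X in _ != X]iter_rot_last iter_rot_neq //; lia.
- suff : iter j rot (rot n.-1) != i.-1 by lia.
  by rewrite -[X in _ != X]iter_rot_penult iter_rot_neq //; lia.
Qed.

Lemma itinerary_succ k : k <= period - 2 ->
  itinerary k (rot n.-1) = itinerary k (rot n.-1).+1.
Proof.
have lt_x0n : rot n.-1 < n by rewrite rot_lt; lia.
move=> le_k; apply/eqP/itinerary_eqP => j lt_jk; rewrite /letter iter_rot_succ; last lia.
have : iter j rot (rot n.-1) != i.-1.
  by rewrite -[X in _ != X]iter_rot_penult iter_rot_neq //; have := period_gt1; lia.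
by move=> ?; apply/idP/idP; lia.
Qed.

Lemma letter_succ_penult :
  letter (period - 2) (rot n.-1) != letter (period - 2) (rot n.-1).+1.
Proof. by rewrite /letter iter_rot_succ // iter_rot_penult prednK // leqnn; lia. Qed.

Local Open Scope ring_scope.

Definition letter_mx (c : bool) : 'M[algC]_n :=
  if c then mxpow (Jmx n) i else mxpow (Jmx n)^T (n - i).

Definition gens := [:: letter_mx true; letter_mx false].

Fixpoint word (s : seq bool) : 'M[algC]_n :=
  if s is c :: s' then letter_mx c *m word s' else 1%:M.

Lemma letter_mxE c (a b : 'I_n) :
  letter_mx c a b = (((i <= b)%N == c) && ((a : nat) == rot b))%:R.
Proof.
have := ltn_ord a; have := ltn_ord b.
case: c; rewrite /letter_mx ?mxpow_Jmx ?mxpow_trJmx /rot;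
  by case: (leqP i b) => /= *; congr (_%:R); apply/eqP/eqP; lia.
Qed.

Lemma wordE s (a y : 'I_n) :
  word s a y = ((itinerary (size s) y == s) && ((a : nat) == iter (size s) rot y))%:R.
Proof.
elim: s a => [|c s IHs] a /=; first by rewrite mxE.
rewrite mxE (bigD1 (Ordinal (iter_rot_lt (size s) (ltn_ord y)))) //= big1 => [|z ne_z].
  rewrite IHs eqxx andbT letter_mxE eqseq_cons addr0 /letter.
  by case: (_ == s); case: (_ == c); rewrite ?mulr1 ?mulr0.
rewrite IHs; have -> : ((z : nat) == iter (size s) rot y) = false.
  by apply: contraNF ne_z => /eqP eq_z; apply/eqP/val_inj.
by rewrite andbF mulr0.
Qed.

Lemma wordsP k w : reflect (exists2 s, size s = k & w = word s) (w \in words gens k).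
Proof.
elim: k w => [|k IHk] w.
  by rewrite inE; apply: (iffP eqP) => [->|[[|//] _ ->]]; first exists [::].
rewrite words_succ; apply: (iffP allpairsPdep).
  move=> [L [u [L_gen u_k ->]]]; have [s <- ->] := elimT (IHk u) u_k.
  by move: L_gen; rewrite !inE => /orP[]/eqP->; [exists (true :: s) | exists (false :: s)].
move=> [[//|c s] [size_s] ->]; exists (letter_mx c), (word s).
by split=> /=; [case: c; rewrite !inE eqxx ?orbT | apply/IHk; exists s |].
Qed.

Lemma word_long s : size s = (2 * period).-1 ->
  word s = 0 \/ exists2 t, size t = period.-1 & word s = word t.
Proof.
move=> size_s; have gt1 := period_gt1.
have [y0 /eqP it_y0 | no_y] := pickP (fun y : 'I_n => itinerary (2 * period).-1 y == s); last first.
  by left; apply/matrixP => a y; rewrite wordE size_s no_y mxE.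
right; exists (itinerary period.-1 y0); first exact: size_itinerary.
apply/matrixP => a y; rewrite !wordE size_itinerary size_s -it_y0.
have -> : iter (2 * period).-1 rot y = iter period.-1 rot y.
  by rewrite (_ : (2 * period).-1 = period.-1 + period)%N ?iterD ?iter_rot_period //; lia.
congr ((_ && _)%:R); apply/eqP/eqP => [/eqP/itinerary_eqP eq_all|]; last first.
  exact: itinerary_period_eq.
by apply/eqP/itinerary_eqP => j lt_j; apply: eq_all; lia.
Qed.

Lemma word_itinerary_notin a j : (a <= 1)%N -> (j < 2 * period - 2)%N ->
  word (itinerary j.+1 (rot n.-1)) \notin wspan gens a j.
Proof.
move=> le_a1 lt_j; have gt1 := period_gt1; set x0 := rot n.-1.
rewrite /wspan; set X := flatten _.
have lt_x0n : (x0 < n)%N by rewrite rot_lt; lia.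
have lt_x1n : (x0.+1 < n)%N by rewrite /x0 /rot; case: (leqP i n.-1); lia.
have short_gen u : u \in X -> exists2 s, (size s <= j)%N & u = word s.
  case/wspan_genP => [|l /andP[_ le_lj] /wordsP[s size_s ->]]; first lia.
  by exists s; rewrite ?size_s.
pose y := Ordinal lt_x0n; pose r := Ordinal (iter_rot_lt j.+1 lt_x0n).
pose y' := Ordinal lt_x1n; pose r' := Ordinal (iter_rot_lt j.+1 lt_x1n).
have word_ry : word (itinerary j.+1 x0) r y = 1 by rewrite wordE size_itinerary !eqxx.
(* Shorter words are annihilated by [u |-> u r y] when [j.+1 < period], and by
   [u |-> u r y - u r' y'] otherwise; both functionals take the value [1] on the
   word itself. *)
apply/negP => w_in; have [lt_jp|le_pj] := ltnP j.+1 period.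
  suff rel : forall u, u \in X -> u r y = 0 * u r y.
    by have := span_entry_rel rel w_in; rewrite word_ry mul0r => /eqP; rewrite oner_eq0.
  move=> u /short_gen[s le_sj ->]; rewrite wordE mul0r /=.
  by rewrite -iterS (negbTE (iter_rot_neq _ _ _ _)) ?andbF //; lia.
suff rel : forall u, u \in X -> u r y = 1 * u r' y'.
  have := span_entry_rel rel w_in; rewrite word_ry mul1r wordE size_itinerary eqxx andbT /=.
  have -> : (itinerary j.+1 x0.+1 == itinerary j.+1 x0) = false.
    apply/negP => /itinerary_eqP eq_it; move: letter_succ_penult.
    by rewrite eq_it ?eqxx //; lia.
  by move=> /eqP; rewrite oner_eq0.
move=> u /short_gen[s le_sj ->]; rewrite !wordE mul1r /= -!iterS !eq_iter_rot //.
case eq_mod: (j.+1 == size s %[mod period]); last by rewrite !andbF.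
by rewrite -itinerary_succ //; have := eqn_mod_gap eq_mod; lia.
Qed.

Lemma wspan_gens_length a : (a <= 1)%N ->
  wspan gens a (2 * period - 2) = wspan gens a (2 * period - 2).+1 /\
  forall j, (j < 2 * period - 2)%N -> wspan gens a j <> wspan gens a j.+1.
Proof.
move=> le_a1; have gt1 := period_gt1; split => [|j lt_j].
  apply: wspan_stable => [|w /wordsP[s size_s ->]]; first lia.
  have /word_long[->|[t size_t ->]] : size s = (2 * period).-1 by lia.
    exact: mem0v.
  by apply: (@memv_wspan _ _ _ _ _ period.-1); [lia | apply/wordsP; exists t].
apply: wspan_strict (word_itinerary_notin le_a1 lt_j); first lia.
by apply/wordsP; exists (itinerary j.+1 (rot n.-1)); rewrite ?size_itinerary.
Qed.

End JordanWords.

Local Open Scope ring_scope.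

Theorem mainTheorem9 (n i : nat) (hi1 : (1 <= i)%N) (hin : (i < n)%N) :
  let d := gcdn n i in
  let S := [:: mxpow (Jmx n) i; mxpow (Jmx n)^T (n - i)] in
  is_length S ((2 * n) %/ d - 2) /\ is_length0 S ((2 * n) %/ d - 2).
Proof.
move=> d S; rewrite -muln_divA ?dvdn_gcdl // -/(period n i).
have [stable0 strict0] := wspan_gens_length hi1 hin (leq0n 1).
have [stable1 strict1] := wspan_gens_length hi1 hin (leqnn 1).
split; split=> [|j]; rewrite ?Lspan_wspan ?L0span_wspan; by [|exact: strict0|exact: strict1].
Qed.
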